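(* For every $\alpha\in[m,M]$ (where $m=\inf_{n\ge1}b_n$, $M=\sup_{n\ge1}b_n$), the level set $S_\alpha=\{x>0:\lambda(x)=\alpha\}$ has Lebesgue measure zero.
   Context: Fix integers $p\ge 3$ and $2\le s<p$, and a set $A\subset\{0,1,\dots,p-1\}$ with $\#A=s$. Let $h:\{0,1,\dots,s-1\}\to A$ be the unique strictly increasing bijection. For a positive integer $n$ with base-$s$ expansion $n=\sum_{i=0}^k\varepsilon_i s^i$ ($\varepsilon_i\in\{0,\dots,s-1\}$, $\varepsilon_k\ne 0$), put $a_n=\sum_{i=0}^k h(\varepsilon_i)p^i$, and put $a_0=h(0)$. Let $b_n=a_n/n^{\log_s p}$ for $n\ge1$. For real $x\ge0$ let $a(x)=a_{\lfloor x\rfloor}$, and for $x>0$ let $\lambda(x)=\lim_{k\to\infty}\frac{a(s^kx)}{(s^kx)^{\log_s p}}$ (this limit exists). *)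

From HB Require Import structures.
From mathcomp Require Import all_boot all_order all_algebra.
From mathcomp Require Import all_classical all_reals all_analysis.
Set Implicit Arguments. Unset Strict Implicit. Unset Printing Implicit Defensive.
Import Order.TTheory GRing.Theory Num.Theory numFieldNormedType.Exports.

Definition hA (p : nat) (A : {set 'I_p}) (i : nat) : nat :=
  nth 0%N (sort leq [seq val x | x <- enum A]) i.

(* a_n = sum_{i=0}^k h(eps_i) p^i, with k = trunc_log s n the index of the
   leading base-s digit (n >= 1), eps_i = (n / s^i) mod s; a_0 = h(0). *)
Definition aseq (p s : nat) (A : {set 'I_p}) (n : nat) : nat :=
  if n == 0%N then hA A 0
  else (\sum_(i < (trunc_log s n).+1) hA A ((n %/ s ^ i) %% s) * p ^ i)%N.

Local Open Scope ring_scope.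

Definition logsp {R : realType} (p s : nat) : R := ln (p%:R) / ln (s%:R).

Definition bseq {R : realType} (p s : nat) (A : {set 'I_p}) (n : nat) : R :=
  (aseq s A n)%:R / (n%:R `^ logsp p s).

Definition afun {R : realType} (p s : nat) (A : {set 'I_p}) (x : R) : R :=
  (aseq s A (Num.truncn x))%:R.

Definition lambda {R : realType} (p s : nat) (A : {set 'I_p}) (x : R) : R :=
  limn (fun k : nat => afun s A ((s%:R) ^+ k * x) / (((s%:R) ^+ k * x) `^ logsp p s)).

Definition mb {R : realType} (p s : nat) (A : {set 'I_p}) : R :=
  inf [set bseq s A n | n in [set n : nat | (1 <= n)%N]].
Definition Mb {R : realType} (p s : nat) (A : {set 'I_p}) : R :=
  sup [set bseq s A n | n in [set n : nat | (1 <= n)%N]].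

From mathcomp Require Import all_boot all_order all_algebra.
From mathcomp Require Import all_classical all_reals all_analysis.
From mathcomp Require Import zify ring lra.
Import Order.TTheory GRing.Theory Num.Theory numFieldNormedType.Exports.

Set Implicit Arguments.
Unset Strict Implicit.
Unset Printing Implicit Defensive.

(* Write d = log_s p and N_k = floor (s^k x).  Since N_(k+1) div s = N_k, the
   digit recursion a_(s n + r) = p a_n + h(r) makes a_(N_k) / p^k nondecreasing
   and (a_(N_k) + 1) / p^k nonincreasing in k, so lambda(x) x^d lies between
   them as soon as N_k > 0.  On {lambda = alpha} intersected with [s^-j, s^j),
   two points with the same N_(k+j) therefore have values of x^d, hence of x,
   within O(p^-k) of each other.  There are at most s^(k+2j) such values, so
   this set is covered by intervals of total length O((s/p)^k), which tends to
   0 because s < p. *)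

Lemma hA_ltn (p : nat) (A : {set 'I_p}) i : 0 < p -> hA A i < p.
Proof.
move=> p_gt0; rewrite /hA.
have [i_lt | i_ge] := ltnP i (size (sort leq [seq val x | x <- enum A])).
  by have := mem_nth 0 i_lt; rewrite mem_sort => /mapP [x _ ->]; exact: ltn_ord.
by rewrite nth_default.
Qed.

Lemma hA_gt0 (p : nat) (A : {set 'I_p}) i : 0 < i < #|A| -> 0 < hA A i.
Proof.
case/andP=> i_gt0 i_lt.
set l := sort leq [seq val x | x <- enum A].
have size_l : size l = #|A| by rewrite size_sort size_map -cardE.
have uniq_l : uniq l by rewrite sort_uniq map_inj_uniq ?enum_uniq //; exact: val_inj.
have sorted_l : sorted leq l by apply: sort_sorted; exact: leq_total.
rewrite /hA -/l lt0n; apply/negP => /eqP l_i0.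
have i_lt_l : i < size l by rewrite size_l.
have l_nth_le : nth 0 l 0 <= nth 0 l i.
  by apply: (sorted_leq_nth leq_trans leqnn 0 sorted_l); rewrite ?inE //; lia.
have := nth_uniq 0 (leq_ltn_trans (leq0n i) i_lt_l) i_lt_l uniq_l.
by move: l_nth_le; rewrite l_i0 leqn0 => /eqP ->; rewrite eqxx; lia.
Qed.

Lemma aseq_divn (p s : nat) (A : {set 'I_p}) n : 1 < s -> s <= n ->
  aseq s A n = p * aseq s A (n %/ s) + hA A (n %% s).
Proof.
move=> s_gt1 s_le_n; set q := n %/ s.
have q_gt0 : 0 < q by rewrite divn_gt0 //; lia.
rewrite /aseq.
have -> : (n == 0) = false by apply/negbTE; lia.
have -> : (q == 0) = false by apply/negbTE; lia.
have log_n : trunc_log s n = (trunc_log s q).+1.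
  apply: trunc_log_eq => //.
  have q_ge := trunc_logP s_gt1 q_gt0; have q_lt := trunc_log_ltn q s_gt1.
  have n_eq := divn_eq n s; have r_lt := ltn_pmod n (ltnW s_gt1).
  rewrite -/q in n_eq; rewrite !expnS in q_lt *.
  move: q_ge q_lt; set X := s ^ _ => q_ge q_lt.
  apply/andP; split; first nia.
  have : s * q.+1 <= s * (s * X) by rewrite leq_mul2l q_lt orbT.
  nia.
rewrite log_n big_ord_recl /= expn0 muln1 divn1 addnC; congr (_ + _).
rewrite big_distrr /=; apply: eq_bigr => i _.
by rewrite /bump /= add1n expnS divnMA expnS mulnCA.
Qed.

Lemma aseq_gt0 (p s : nat) (A : {set 'I_p}) n : 1 < s -> #|A| = s -> 0 < n ->
  0 < aseq s A n.
Proof.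
move=> s_gt1 card_A.
have p_gt0 : 0 < p by have := max_card A; rewrite card_ord; lia.
elim/ltn_ind: n => n IH n_gt0.
have [n_lt_s | s_le_n] := ltnP n s.
  rewrite /aseq (_ : (n == 0) = false); last by apply/negbTE; lia.
  rewrite (_ : trunc_log s n = 0); last by apply/eqP; rewrite trunc_log_eq0; lia.
  rewrite big_ord1 expn0 muln1 divn1 modn_small //.
  by apply: hA_gt0; lia.
rewrite aseq_divn //.
have : 0 < aseq s A (n %/ s).
  by apply: IH; [exact: ltn_Pdiv | rewrite divn_gt0 //; lia].
nia.
Qed.

Local Open Scope classical_set_scope.
Local Open Scope ring_scope.

Section RealFacts.
Variable R : realType.

Lemma powR_natr_logsp (p s : nat) : (1 < s)%N -> (0 < p)%N ->
  (s%:R : R) `^ logsp p s = p%:R.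
Proof.
move=> s_gt1 p_gt0; rewrite /powR pnatr_eq0 (_ : (s == 0)%N = false); last by lia.
rewrite /logsp divfK ?lnK ?posrE ?ltr0n //.
by rewrite gt_eqF // ln_gt0 // ltr1n.
Qed.

Lemma powR_exprn_logsp (p s k : nat) : (1 < s)%N -> (0 < p)%N ->
  ((s%:R : R) ^+ k) `^ logsp p s = p%:R ^+ k.
Proof.
move=> s_gt1 p_gt0.
by rewrite -powR_mulrn ?ler0n // -powRrM mulrC powRrM powR_natr_logsp // powR_mulrn ?ler0n.
Qed.

Lemma logsp_ge1 (p s : nat) : (1 < s)%N -> (s <= p)%N -> 1 <= logsp p s :> R.
Proof.
move=> s_gt1 s_le_p; rewrite /logsp ler_pdivlMr ?mul1r ?ln_gt0 ?ltr1n //.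
by rewrite ler_ln ?posrE ?ltr0n ?ler_nat; lia.
Qed.

Lemma powRB_ge_lin (d e x y : R) : 1 <= d -> 0 < e -> e <= y -> y <= x ->
  e `^ (d - 1) * (x - y) <= x `^ d - y `^ d.
Proof.
move=> d_ge1 e_gt0 e_le_y y_le_x.
have y_gt0 : 0 < y by apply: lt_le_trans e_le_y.
have ratio_le : x / y * y `^ d <= x `^ d.
  have := @le1r_powRZ R (x / y) y d.
  rewrite divfK ?gt_eqF //; apply => //; last exact: ltW.
  by rewrite ler_pdivlMr // mul1r.
have powR_y : y `^ d = y * y `^ (d - 1) by rewrite mulr_powRB1 ?(ltW y_gt0) //; lra.
have powR_e_le : e `^ (d - 1) <= y `^ (d - 1).
  by apply: ge0_ler_powR => //; rewrite ?nnegrE; lra.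
have : (x - y) * e `^ (d - 1) <= (x - y) * y `^ (d - 1).
  by apply: ler_wpM2l; lra.
have : x / y * y `^ d - y `^ d = (x - y) * y `^ (d - 1).
  by rewrite powR_y; field; rewrite gt_eqF.
lra.
Qed.

Lemma truncn_natrM_divn (s : nat) (t : R) : (0 < s)%N -> 0 <= t ->
  (Num.truncn (s%:R * t) %/ s)%N = Num.truncn t.
Proof.
move=> s_gt0 t_ge0.
have lb : (s * Num.truncn t <= Num.truncn (s%:R * t))%N.
  by rewrite truncn_ge_nat ?mulr_ge0 // natrM ler_wpM2l // truncn_le.
have ub : (Num.truncn (s%:R * t) < s * (Num.truncn t).+1)%N.
  rewrite truncn_lt_nat ?mulr_ge0 // natrM ltr_pM2l ?ltr0n //.
  by case/andP: (truncn_itv t_ge0).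
nia.
Qed.

Lemma exists_exprn_bracket (s : nat) (x : R) : (1 < s)%N -> 0 < x ->
  exists j : nat, ((s%:R : R) ^+ j)^-1 <= x /\ x < (s%:R : R) ^+ j.
Proof.
move=> s_gt1 x_gt0; set j := (Num.truncn (x + x^-1)).+1.
have j_gt : x + x^-1 < j%:R by apply: truncnS_gt.
have s_j : j%:R < (s%:R : R) ^+ j by rewrite -natrX ltr_nat ltn_expl.
have xV_gt0 : 0 < x^-1 by rewrite invr_gt0.
have sj_gt0 : 0 < (s%:R : R) ^+ j by lra.
exists j; split; last by lra.
by rewrite -(invrK x) lef_pV2 ?posrE //; lra.
Qed.

Lemma truncn_exprnD_gt0 (s K j : nat) (x : R) : (0 < s)%N ->
  ((s%:R : R) ^+ j)^-1 <= x -> (0 < Num.truncn ((s%:R : R) ^+ (K + j) * x))%N.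
Proof.
move=> s_gt0 x_ge; rewrite truncn_gt0 exprD -mulrA.
have sj_gt0 : 0 < (s%:R : R) ^+ j by rewrite exprn_gt0 ?ltr0n.
apply: mulr_ege1; first by rewrite exprn_ege1 // ler1n.
by rewrite -ler_pdivrMl // mulr1.
Qed.

End RealFacts.

Section RenormalizedDigits.
Variables (R : realType) (p s : nat) (A : {set 'I_p}).
Hypotheses (s_gt1 : (1 < s)%N) (p_gt0 : (0 < p)%N).
Variable x : R.
Hypothesis x_gt0 : 0 < x.

Local Notation N k := (Num.truncn ((s%:R : R) ^+ k * x)).

Let N_succ_divn k : (N k.+1 %/ s)%N = N k.
Proof.
rewrite exprS -mulrA truncn_natrM_divn ?(ltnW s_gt1) //.
by rewrite mulr_ge0 ?exprn_ge0 ?ler0n ?ltW.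
Qed.

Variable K : nat.
Hypothesis N_K_gt0 : (0 < N K)%N.

Let N_gt0 j : (0 < N (j + K))%N.
Proof.
elim: j => // j IH; have := N_succ_divn (j + K).
by rewrite addSn; case: (N _.+1) => [|n]; rewrite ?div0n //; lia.
Qed.

Let aseq_N_succ j : aseq s A (N (j.+1 + K)) =
  (p * aseq s A (N (j + K)) + hA A (N (j.+1 + K) %% s))%N.
Proof.
have N_div := N_succ_divn (j + K).
have s_le : (s <= N (j + K).+1)%N.
  by rewrite -divn_gt0 ?N_div ?N_gt0 //; lia.
by rewrite addSn aseq_divn ?N_div.
Qed.

Let pR : R := p%:R.
Let v j : R := (aseq s A (N (j + K)))%:R / pR ^+ (j + K).

Let pR_gt0 : 0 < pR. Proof. by rewrite ltr0n. Qed.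

Let v_nondecreasing : nondecreasing_seq v.
Proof.
apply/nondecreasing_seqP => j.
rewrite /v aseq_N_succ addSn (exprS pR) natrD natrM -/pR.
set P := pR ^+ (j + K); set a := (aseq s A _)%:R; set h := (hA A _)%:R.
have P_gt0 : 0 < P by rewrite exprn_gt0 // pR_gt0.
have -> : (pR * a + h) / (pR * P) = a / P + h / (pR * P).
  by field; rewrite !gt_eqF ?pR_gt0.
by rewrite lerDl divr_ge0 ?ler0n // mulr_ge0 ?ltW ?pR_gt0.
Qed.

Let v_upper_nonincreasing j :
  v j.+1 + (pR ^+ (j.+1 + K))^-1 <= v j + (pR ^+ (j + K))^-1.
Proof.
rewrite /v aseq_N_succ addSn (exprS pR) natrD natrM -/pR.
have : (hA A (N (j + K).+1 %% s) + 1 <= p)%N by rewrite addn1 hA_ltn.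
rewrite -(ler_nat R) natrD -/pR.
set P := pR ^+ (j + K); set a := (aseq s A _)%:R; set h := (hA A _)%:R => h_le.
have P_gt0 : 0 < P by rewrite exprn_gt0 // pR_gt0.
have -> : (pR * a + h) / (pR * P) + (pR * P)^-1 = (pR * a + (h + 1)) / (pR * P).
  by field; rewrite !gt_eqF ?pR_gt0.
have -> : a / P + P^-1 = (pR * a + pR) / (pR * P) by field; rewrite !gt_eqF ?pR_gt0.
by rewrite ler_pM2r ?invr_gt0 ?mulr_gt0 ?pR_gt0 // lerD2l.
Qed.

Let v_le j : v j <= v 0 + (pR ^+ K)^-1.
Proof.
have upper_le i : v i + (pR ^+ (i + K))^-1 <= v 0 + (pR ^+ K)^-1.
  by elim: i => [|i IH] //; exact: le_trans (v_upper_nonincreasing i) IH.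
have := upper_le j.
have : 0 <= (pR ^+ (j + K))^-1 by rewrite invr_ge0 exprn_ge0 ?ltW ?pR_gt0.
lra.
Qed.

Lemma lambda_powR_bounds :
  (aseq s A (N K))%:R / pR ^+ K <= lambda s A x * x `^ logsp p s <=
  (aseq s A (N K)).+1%:R / pR ^+ K.
Proof.
have v_ub : has_ubound (range v).
  by exists (v 0 + (pR ^+ K)^-1) => _ [j _ <-]; exact: v_le.
have v_cvg := nondecreasing_cvgn v_nondecreasing v_ub.
have xd_gt0 : 0 < x `^ logsp p s by apply: powR_gt0.
have ratio_cvg : (fun k : nat => afun s A ((s%:R) ^+ k * x) /
    (((s%:R) ^+ k * x) `^ logsp p s)) @ \oo --> sup (range v) / x `^ logsp p s.
  rewrite -(cvg_shiftn K).
  have -> : [sequence afun s A ((s%:R) ^+ (n + K) * x) /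
      (((s%:R) ^+ (n + K) * x) `^ logsp p s)]_n = (fun n => v n * (x `^ logsp p s)^-1).
    apply/funext => n /=.
    rewrite /afun /v powRM ?exprn_ge0 ?ler0n ?ltW // powR_exprn_logsp //.
    by rewrite invfM mulrA.
  exact: cvgMr_tmp.
rewrite /lambda (cvg_lim _ ratio_cvg) ?divfK ?gt_eqF //; apply/andP; split.
  by apply: ub_le_sup => //; exists 0%N.
rewrite -addn1 natrD mulrDl mul1r.
apply: ge_sup; first by exists (v 0), 0%N.
by move=> _ [j _ <-]; exact: v_le.
Qed.

End RenormalizedDigits.

Section IntervalCovers.
Variable R : realType.

Lemma subset_itv_inf (T : set R) (d : R) : has_lbound T ->
  (forall x y, T x -> T y -> x - y <= d) -> T `<=` `[inf T, inf T + d]%classic.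
Proof.
move=> T_lb T_diam x Tx; rewrite /= in_itv /=; apply/andP; split; first exact: ge_inf.
rewrite -lerBlDr; apply: lb_le_inf; first by exists x.
by move=> y Ty; have := T_diam x y Tx Ty; lra.
Qed.

Lemma negligible_itv_covers (E : set R) (n : nat -> nat) (c : nat -> nat -> R)
    (r : nat -> R) : (forall K, 0 <= r K) ->
  (forall K, E `<=` \big[setU/set0]_(N < n K) `[c K N, c K N + r K]%classic) ->
  (fun K => (n K)%:R * r K) @ \oo --> 0 ->
  (@lebesgue_measure R).-negligible E.
Proof.
move=> r_ge0 E_cover total_cvg0.
set B := \bigcap_K \big[setU/set0]_(N < n K) `[c K N, c K N + r K]%classic.
have B_meas : measurable B.
  apply: bigcapT_measurable => K; apply: bigsetU_measurable => N _.
  exact: measurable_itv.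
have mu_B_le K : (lebesgue_measure B <= ((n K)%:R * r K)%:E)%E.
  apply: le_trans (@content_subadditive _ _ _ (@lebesgue_measure R) B
    (fun N => `[c K N, c K N + r K]%classic) (n K) _ B_meas _) _.
  - by move=> N _; exact: measurable_itv.
  - by move=> x Bx; exact: Bx K I.
  apply: (@le_trans _ _ (\sum_(N < n K) (r K)%:E)%E).
    apply: lee_sum => N _ /=; rewrite lebesgue_measure_itv /=.
    case: ifP => _; last by rewrite lee_fin.
    by rewrite -EFinB lee_fin addrC addKr.
  by rewrite sumEFin sumr_const card_ord mulr_natl.
exists B; split => //; last by move=> x Ex K _; exact: E_cover.
apply/eqP; rewrite -measure_le0; apply/lee_addgt0Pr => eps eps_gt0.
have [K _ small] := (cvgrPdist_lt _ _).1 total_cvg0 eps eps_gt0.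
have := small K (leqnn K); rewrite /= sub0r normrN add0e => total_lt.
apply: le_trans (mu_B_le K) _; rewrite lee_fin ltW //.
exact: le_lt_trans (ler_norm _) total_lt.
Qed.

End IntervalCovers.

Section LevelSetShell.
Variables (R : realType) (p s : nat) (A : {set 'I_p}).
Hypotheses (s_gt1 : (1 < s)%N) (s_lt_p : (s < p)%N).
Variable alpha : R.
Hypothesis alpha_gt0 : 0 < alpha.
Variable j : nat.

Let sR : R := s%:R.
Let pR : R := p%:R.
Let shell := [set x : R |
  (0 < x /\ lambda s A x = alpha) /\ (sR ^+ j)^-1 <= x /\ x < sR ^+ j].
(* By [powRB_ge_lin], [c] bounds the slope of [x `^ logsp p s] from below on the shell. *)
Let c : R := (sR ^+ j)^-1 `^ (logsp p s - 1).
Let width K : R := (c * alpha * pR ^+ (K + j))^-1.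
Let cell K N := [set x | shell x /\ Num.truncn (sR ^+ (K + j) * x) = N].

Let p_gt0 : (0 < p)%N. Proof. lia. Qed.
Let sR_gt0 : 0 < sR. Proof. by rewrite ltr0n; lia. Qed.
Let pR_gt0 : 0 < pR. Proof. by rewrite ltr0n. Qed.
Let shell_lb_gt0 : 0 < (sR ^+ j)^-1. Proof. by rewrite invr_gt0 exprn_gt0. Qed.
Let c_gt0 : 0 < c. Proof. exact: powR_gt0. Qed.
Let width_gt0 K : 0 < width K.
Proof. by rewrite invr_gt0 !mulr_gt0 // exprn_gt0. Qed.

Let cell_diam K N x y : cell K N x -> cell K N y -> x - y <= width K.
Proof.
move=> [[[x_gt0 lam_x] [x_ge _]] N_x] [[[y_gt0 lam_y] [y_ge _]] N_y].
have [x_lt_y | y_le_x] := ltP x y; first by have := width_gt0 K; lra.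
have := lambda_powR_bounds A s_gt1 p_gt0 x_gt0 (truncn_exprnD_gt0 K (ltnW s_gt1) x_ge).
have := lambda_powR_bounds A s_gt1 p_gt0 y_gt0 (truncn_exprnD_gt0 K (ltnW s_gt1) y_ge).
rewrite -/sR -/pR lam_x lam_y N_x N_y -addn1 natrD mulrDl mul1r.
set a := (aseq s A N)%:R / _; set P := pR ^+ (K + j).
have := powRB_ge_lin (logsp_ge1 R s_gt1 (ltnW s_lt_p)) shell_lb_gt0 y_ge y_le_x.
rewrite -/c; set X := x `^ _; set Y := y `^ _ => XY /andP[lb_y ub_y] /andP[lb_x ub_x].
have P_gt0 : 0 < P by rewrite exprn_gt0.
have alpha_XY : alpha * (X - Y) <= P^-1 by lra.
have alphaP_ge0 : 0 <= alpha * P by rewrite mulr_ge0 ?ltW.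
have alphaP_XY := ler_wpM2l alphaP_ge0 XY.
have := ler_wpM2l (ltW P_gt0) alpha_XY; rewrite divff ?gt_eqF // => P_alpha_XY.
rewrite /width -[leRHS]div1r ler_pdivlMr ?mulr_gt0 // -/P.
lra.
Qed.

Let shell_cover K : shell `<=`
  \big[setU/set0]_(N < s ^ (K + j + j)) `[inf (cell K N), inf (cell K N) + width K]%classic.
Proof.
move=> x shell_x.
rewrite -(bigcup_mkord _ (fun N => `[inf (cell K N), inf (cell K N) + width K]%classic)).
have [[x_gt0 _] [_ x_lt]] := shell_x.
exists (Num.truncn (sR ^+ (K + j) * x)).
  rewrite /= truncn_lt_nat ?mulr_ge0 ?exprn_ge0 ?ltW // natrX -/sR (exprD sR (K + j) j).
  by rewrite ltr_pM2l ?exprn_gt0.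
apply: subset_itv_inf; last by split.
  by exists 0 => y [[[y_gt0 _] _] _]; exact: ltW.
exact: cell_diam.
Qed.

Let count_width_cvg0 : (fun K => (s ^ (K + j + j))%:R * width K) @ \oo --> 0.
Proof.
have ratio_lt1 : `|sR / pR| < 1.
  by rewrite ger0_norm ?divr_ge0 ?ltW // ltr_pdivrMr // mul1r ltr_nat.
have -> : (fun K => (s ^ (K + j + j))%:R * width K) =
    (fun K => sR ^+ (j + j) / (c * alpha * pR ^+ j) * (sR / pR) ^+ K).
  apply/funext => K; rewrite /width natrX -/sR expr_div_n -addnA !exprD.
  by field; rewrite !gt_eqF ?exprn_gt0.
have := cvg_expr ratio_lt1.
by move/(cvgMl_tmp (a := sR ^+ (j + j) / (c * alpha * pR ^+ j))); rewrite mulr0.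
Qed.

Lemma shell_negligible : (@lebesgue_measure R).-negligible shell.
Proof.
apply: (@negligible_itv_covers R shell (fun K => s ^ (K + j + j))%N
  (fun K N => inf (cell K N)) width _ shell_cover count_width_cvg0).
by move=> K; exact/ltW/width_gt0.
Qed.

End LevelSetShell.

Lemma lambda_gt0 (R : realType) (p s : nat) (A : {set 'I_p}) (x : R) :
  (1 < s)%N -> #|A| = s -> 0 < x -> 0 < lambda s A x.
Proof.
move=> s_gt1 card_A x_gt0.
have p_gt0 : (0 < p)%N by have := max_card A; rewrite card_ord; lia.
have [j [x_ge _]] := exists_exprn_bracket s_gt1 x_gt0.
have N_gt0 := truncn_exprnD_gt0 0 (ltnW s_gt1) x_ge.
have [a_le _] := andP (lambda_powR_bounds A s_gt1 p_gt0 x_gt0 N_gt0).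
have a_gt0 := aseq_gt0 s_gt1 card_A N_gt0.
have : 0 < lambda s A x * x `^ logsp p s.
  by apply: lt_le_trans a_le; rewrite divr_gt0 ?exprn_gt0 ?ltr0n.
by rewrite pmulr_lgt0 // powR_gt0.
Qed.

Theorem mainTheorem13 (R : realType) (p s : nat) (A : {set 'I_p})
  (hp : (3 <= p)%N) (hs2 : (2 <= s)%N) (hsp : (s < p)%N) (hA : #|A| = s)
  (alpha : R) (hm : mb s A <= alpha) (hM : alpha <= Mb s A) :
  (@lebesgue_measure R).-negligible
    [set x : R | 0 < x /\ lambda s A x = alpha].
Proof.
have [alpha_le0 | alpha_gt0] := leP alpha 0.
  apply: (negligibleS _ (negligible_set0 _)) => x [x_gt0 lam_x].
  by have := lambda_gt0 hs2 hA x_gt0; rewrite lam_x; lra.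
apply: negligibleS (negligible_bigcup (shell_negligible A hs2 hsp alpha_gt0)).
move=> x [x_gt0 lam_x]; have [j x_bracket] := exists_exprn_bracket hs2 x_gt0.
by exists j.
Qed.
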